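(* Let $G=(V,E)$ be a finite simple graph which is $S_{1,1,5}$-free, $K_4$-free, diamond-free and butterfly-free. Let $xy\in E$ and let $r$ be a vertex with $rx\in E$ and $ry\notin E$. For $i\ge 1$ let $N_i=\{z\in V:\operatorname{dist}_G(z,\{x,y\})=i\}$. Assume $N_2$ is an independent set and every vertex of $N_3$ has exactly one neighbor in $N_2$. If $|N_2|\ge 5$ and $N_5\ne\emptyset$, then $G[N_5]$ contains neither an induced path on three vertices nor a triangle.
   Context: $S_{1,1,5}$ is the tree with a center $u$ adjacent to $a$, $b$ and $z_1$, where $u,z_1,\dots,z_5$ is an induced path, and no other edges. A diamond is $K_4$ minus one edge; a butterfly consists of two disjoint edges (inducing $2K_2$) together with a vertex adjacent to all four of their endpoints. $\operatorname{dist}_G(z,\{x,y\})$ is the minimum of the distances from $z$ to $x$ and to $y$. *)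

From mathcomp Require Import all_boot.
Set Implicit Arguments. Unset Strict Implicit. Unset Printing Implicit Defensive.

(* A finite simple graph: vertex type T : finType, adjacency e : rel T,
   required symmetric and irreflexive in the theorem. *)

Definition has_induced (T : finType) (e : rel T) (n : nat) (h : rel 'I_n) : Prop :=
  exists f : 'I_n -> T, injective f /\
    forall i j : 'I_n, i != j -> e (f i) (f j) = h i j.

Definition induced_free (T : finType) (e : rel T) (n : nat) (h : rel 'I_n) : Prop :=
  ~ has_induced e h.

Definition graph_of {n : nat} (E : seq (nat * nat)) : rel 'I_n :=
  fun i j => ((nat_of_ord i, nat_of_ord j) \in E) || ((nat_of_ord j, nat_of_ord i) \in E).

(* S_{1,1,5}: 0 = u, 1 = a, 2 = b, 3..7 = z1..z5 *)
Definition S115 : rel 'I_8 :=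
  graph_of [:: (0,1); (0,2); (0,3); (3,4); (4,5); (5,6); (6,7)].
Definition K4 : rel 'I_4 := graph_of [:: (0,1); (0,2); (0,3); (1,2); (1,3); (2,3)].
Definition diamond : rel 'I_4 := graph_of [:: (0,1); (0,2); (0,3); (1,2); (1,3)].
Definition butterfly : rel 'I_5 :=
  graph_of [:: (0,1); (0,2); (0,3); (0,4); (1,2); (3,4)].

Definition dist_le (T : finType) (e : rel T) (S : {set T}) (z : T) (k : nat) : bool :=
  [exists j : 'I_k.+1, exists p : j.-tuple T, path e z p && (last z p \in S)].

Definition Nlayer (T : finType) (e : rel T) (x y : T) (i : nat) : {set T} :=
  [set z | dist_le e [set x; y] z i && ~~ dist_le e [set x; y] z i.-1].

From mathcomp Require Import all_boot.
Set Implicit Arguments. Unset Strict Implicit. Unset Printing Implicit Defensive.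

(* Both configurations give b, c in N_5 and p4 in N_4 with bc, bp4 in E and
   cp4 not in E: otherwise the two ends of the P_3 (resp. the other two vertices
   of the triangle) would both see a neighbour in N_4 of the middle vertex, and
   a diamond (resp. a K_4) would appear.  Follow a shortest path
   c b p4 p3 p2 p1 t down to t in {x, y}, say t = x; p2 is the only neighbour of
   p3 in N_2.  Segments of this induced path are the long arms of the S_{1,1,5}
   excluded below.
   First, no vertex of N_1 has two neighbours in N_2, so the vertices of
   N_2 - {p2} have distinct neighbours in N_1, none adjacent to p2: this gives a
   set W of at least four vertices of N_1, each adjacent to x or y.  If p1 sees
   y, at most one vertex of W sees x and at most one sees y.  Otherwise W splits
   into neighbours of p1, common neighbours of x and y, and private neighbours
   of y, at most 1, 1 and 2 of them, the last ones adjacent; a common neighbour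
   and two private neighbours of y then form a butterfly centred at y. *)

Definition pattern_adj (E : seq (nat * nat)) (i j : nat) : bool :=
  ((i, j) \in E) || ((j, i) \in E).

Definition pattern_separated n E (i j : nat) : bool :=
  pattern_adj E i j ||
  has (fun k => [&& k != i, k != j & pattern_adj E i k != pattern_adj E j k]) (iota 0 n).

Definition pattern_injective n E (D : seq (nat * nat)) : bool :=
  all (fun i => all (fun j => [|| i == j, pattern_adj D i j | pattern_separated n E i j])
                    (iota 0 n)) (iota 0 n).

Section InducedPatterns.
Variables (T : finType) (e : rel T).
Hypotheses (e_sym : symmetric e) (e_irr : irreflexive e).

(* Distinctness is only required for the pairs in [D]: [pattern_injective] checks
   by computation that every other pair is adjacent or separated by a third vertex. *)
Lemma has_induced_nth n E D (vs : seq T) (d : T) :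
  (forall i j, i < n -> j < n -> i != j -> e (nth d vs i) (nth d vs j) = pattern_adj E i j) ->
  (forall i j, (i, j) \in D -> nth d vs i != nth d vs j) ->
  pattern_injective n E D ->
  has_induced e (@graph_of n E).
Proof.
move=> adjE distD injE; exists (fun i : 'I_n => nth d vs i); split; last first.
  by move=> i j ij; rewrite adjE.
move=> [i ltin] [j ltjn] /= eqij; apply/val_inj/eqP => /=; apply: contraT => neqij.
move/allP/(_ i): injE; rewrite mem_iota ltin => /(_ isT) /allP /(_ j).
rewrite mem_iota ltjn (negbTE neqij) => /(_ isT) /or3P[//|/orP[]/distD|/orP[]].
- by rewrite eqij eqxx.
- by rewrite eqij eqxx.
- by move=> adjij; move: (adjE i j ltin ltjn neqij); rewrite eqij e_irr adjij.
move=> /hasP[k]; rewrite mem_iota /= => ltkn /and3P[ki kj].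
by rewrite -(adjE i k) 1?eq_sym // -(adjE j k) 1?eq_sym // eqij eqxx.
Qed.

Ltac pattern_edge :=
  match goal with |- _ = ?r => let r' := eval vm_compute in r in change r with r' end;
  first [ assumption | rewrite e_sym; assumption
        | apply/negbTE; assumption | apply/negbTE; rewrite e_sym; assumption ].

Lemma no_induced_S115 (S115_free : induced_free e S115) u a b z1 z2 z3 z4 z5 :
  a != b ->
  e u a -> e u b -> e u z1 -> e z1 z2 -> e z2 z3 -> e z3 z4 -> e z4 z5 ->
  ~~ e a b -> ~~ e a z1 -> ~~ e a z2 -> ~~ e a z3 -> ~~ e a z4 -> ~~ e a z5 ->
  ~~ e b z1 -> ~~ e b z2 -> ~~ e b z3 -> ~~ e b z4 -> ~~ e b z5 ->
  ~~ e u z2 -> ~~ e u z3 -> ~~ e u z4 -> ~~ e u z5 ->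
  ~~ e z1 z3 -> ~~ e z1 z4 -> ~~ e z1 z5 -> ~~ e z2 z4 -> ~~ e z2 z5 -> ~~ e z3 z5 -> False.
Proof.
move=> neqab *; apply: S115_free.
apply: (@has_induced_nth 8 _ [:: (1, 2)] [:: u; a; b; z1; z2; z3; z4; z5] u) => //.
- move=> i j ltin ltjn.
  case: i ltin => [|[|[|[|[|[|[|[|i]]]]]]]] // _;
  case: j ltjn => [|[|[|[|[|[|[|[|j]]]]]]]] // _ _; pattern_edge.
- by move=> i j; rewrite inE => /eqP[-> ->].
Qed.

Lemma no_K4 (K4_free : induced_free e K4) a b c d :
  e a b -> e a c -> e a d -> e b c -> e b d -> e c d -> False.
Proof.
move=> *; apply: K4_free; apply: (@has_induced_nth 4 _ [::] [:: a; b; c; d] a) => //.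
move=> i j ltin ltjn.
case: i ltin => [|[|[|[|i]]]] // _; case: j ltjn => [|[|[|[|j]]]] // _ _; pattern_edge.
Qed.

Lemma no_induced_diamond (diamond_free : induced_free e diamond) a b c d :
  c != d -> e a b -> e a c -> e a d -> e b c -> e b d -> ~~ e c d -> False.
Proof.
move=> neqcd *; apply: diamond_free.
apply: (@has_induced_nth 4 _ [:: (2, 3)] [:: a; b; c; d] a) => //.
- move=> i j ltin ltjn.
  case: i ltin => [|[|[|[|i]]]] // _; case: j ltjn => [|[|[|[|j]]]] // _ _; pattern_edge.
- by move=> i j; rewrite inE => /eqP[-> ->].
Qed.

Lemma no_induced_butterfly (butterfly_free : induced_free e butterfly) a b c d f :
  e a b -> e a c -> e a d -> e a f -> e b c -> e d f ->
  ~~ e b d -> ~~ e b f -> ~~ e c d -> ~~ e c f -> False.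
Proof.
move=> *; apply: butterfly_free.
apply: (@has_induced_nth 5 _ [::] [:: a; b; c; d; f] a) => //.
move=> i j ltin ltjn.
case: i ltin => [|[|[|[|[|i]]]]] // _; case: j ltjn => [|[|[|[|[|j]]]]] // _ _; pattern_edge.
Qed.

Lemma common_neighbor_of_edge_eq (K4_free : induced_free e K4)
    (diamond_free : induced_free e diamond) a b c d :
  e a b -> e a c -> e a d -> e b c -> e b d -> c = d.
Proof.
move=> eab eac ead ebc ebd; apply/eqP; apply: contraT => neqcd; exfalso.
case ecd: (e c d); first exact: (no_K4 K4_free eab eac ead ebc ebd ecd).
by apply: (no_induced_diamond diamond_free neqcd eab eac ead ebc ebd); rewrite ecd.
Qed.

End InducedPatterns.

Arguments no_induced_S115 {T e} e_sym e_irr S115_free u a b z1 z2 z3 z4 z5.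
Arguments no_K4 {T e} e_sym e_irr K4_free a b c d.
Arguments no_induced_butterfly {T e} e_sym e_irr butterfly_free a b c d f.

Section DistanceToSet.
Variables (T : finType) (e : rel T) (S : {set T}).

Lemma dist_leP z k :
  reflect (exists p, [/\ size p <= k, path e z p & last z p \in S]) (dist_le e S z k).
Proof.
apply: (iffP existsP) => [[j /existsP[p /andP[pp lp]]]|[p [sz pp lp]]].
  by exists p; rewrite size_tuple -ltnS ltn_ord.
have ltpk : size p < k.+1 by rewrite ltnS.
by exists (Ordinal ltpk); apply/existsP; exists (in_tuple p); rewrite pp lp.
Qed.

Lemma dist_le0 z : dist_le e S z 0 = (z \in S).
Proof.
by apply/dist_leP/idP => [[[|w p] []]|zS] //; exists [::].
Qed.

Lemma dist_le_leq z k k' : k <= k' -> dist_le e S z k -> dist_le e S z k'.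
Proof.
move=> lekk' /dist_leP[p [sz pp lp]]; apply/dist_leP; exists p.
by split=> //; apply: leq_trans lekk'.
Qed.

Lemma dist_le_adj z w k : e z w -> dist_le e S w k -> dist_le e S z k.+1.
Proof.
by move=> ezw /dist_leP[p [sz pp lp]]; apply/dist_leP; exists (w :: p); rewrite /= ezw.
Qed.

Lemma dist_leS z k :
  dist_le e S z k.+1 -> z \in S \/ exists2 w, e z w & dist_le e S w k.
Proof.
case/dist_leP=> [[|w p] [sz /= pp lp]]; [by left | right].
case/andP: pp => ezw pp; exists w => //.
by apply/dist_leP; exists p.
Qed.

End DistanceToSet.

Section Layers.
Variables (T : finType) (e : rel T) (x y : T).

(* [Nlayer e x y 0] is empty; the layer 0 is {x, y}. *)
Definition layer (i : nat) : {set T} := if i is 0 then [set x; y] else Nlayer e x y i.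

Lemma layer0 z : (z \in layer 0) = (z == x) || (z == y).
Proof. by rewrite !inE. Qed.

Lemma dist_le_layer i z : z \in layer i -> dist_le e [set x; y] z i.
Proof. by case: i => [|i]; rewrite /= ?dist_le0 // inE => /andP[]. Qed.

Lemma layer_dist_gt i z k : z \in layer i -> k < i -> ~~ dist_le e [set x; y] z k.
Proof.
case: i => [|i] //=; rewrite inE => /andP[_ ndist] ltki.
by apply: contra ndist; apply: dist_le_leq.
Qed.

Lemma layer_neq i j u v : u \in layer i -> v \in layer j -> i != j -> u != v.
Proof.
move=> ui vj; apply: contraNneq => equv; move: ui; rewrite {}equv => vi.
by case: ltngtP => // ltij; [move: (layer_dist_gt vj ltij) | move: (layer_dist_gt vi ltij)];
   rewrite dist_le_layer.
Qed.

Lemma layer_down i z : z \in layer i.+1 -> exists2 w, w \in layer i & e z w.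
Proof.
move=> zi; have [zS|[w ezw dw]] := dist_leS (dist_le_layer zi).
  by move: (layer_dist_gt zi (ltn0Sn i)) => /negP; rewrite dist_le0.
exists w => //; case: i zi dw => [|i] zi dw; first by rewrite /= -(dist_le0 e).
rewrite inE dw /=; apply: contra (layer_dist_gt zi (ltnSn i.+1)).
exact: dist_le_adj.
Qed.

Lemma layer1_adj z : z \in layer 1 -> e z x || e z y.
Proof. by case/layer_down=> w; rewrite layer0 => /orP[]/eqP-> ->; rewrite ?orbT. Qed.

Hypothesis e_sym : symmetric e.

Lemma layer_nonadj i j u v : u \in layer i -> v \in layer j -> i.+1 < j -> ~~ e u v.
Proof.
move=> ui vj ltij; apply/negP => euv; rewrite e_sym in euv.
by move: (layer_dist_gt vj ltij); rewrite (dist_le_adj euv (dist_le_layer ui)).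
Qed.

End Layers.

Lemma layerC (T : finType) (e : rel T) x y : layer e x y =1 layer e y x.
Proof. by case=> [|i]; rewrite /layer /Nlayer setUC. Qed.

Section LongInducedPath.
Variables (T : finType) (e : rel T).
Hypotheses (e_sym : symmetric e) (e_irr : irreflexive e).
Hypotheses (S115_free : induced_free e S115) (K4_free : induced_free e K4)
  (diamond_free : induced_free e diamond) (butterfly_free : induced_free e butterfly).

Local Notation S115_absurd := (no_induced_S115 e_sym e_irr S115_free).
Local Notation K4_absurd := (no_K4 e_sym e_irr K4_free).
Local Notation butterfly_absurd := (no_induced_butterfly e_sym e_irr butterfly_free).
Local Notation common_neighbor_eq :=
  (common_neighbor_of_edge_eq e_sym e_irr K4_free diamond_free).

Section DescendingPath.
Variables (x y : T).
Hypothesis exy : e x y.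
Local Notation N := (layer e x y).
Hypotheses (N2_indep : forall u v, u \in N 2 -> v \in N 2 -> ~~ e u v)
  (N2_large : 5 <= #|N 2|).
Variables (c b p4 p3 p2 p1 : T).
Hypotheses (c5 : c \in N 5) (b5 : b \in N 5) (p4_4 : p4 \in N 4) (p3_3 : p3 \in N 3)
  (p2_2 : p2 \in N 2) (p1_1 : p1 \in N 1).
Hypotheses (ebc : e b c) (ebp4 : e b p4) (ncp4 : ~~ e c p4) (ep4p3 : e p4 p3)
  (ep3p2 : e p3 p2) (ep2p1 : e p2 p1) (ep1x : e p1 x).
Hypothesis p3_N2_uniq : forall w, w \in N 2 -> e p3 w -> w = p2.

Let x0 : x \in N 0. Proof. by rewrite layer0 eqxx. Qed.
Let y0 : y \in N 0. Proof. by rewrite layer0 eqxx orbT. Qed.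

Lemma N0_adj t t' : t \in N 0 -> t' \in N 0 -> t != t' -> e t t'.
Proof. by rewrite !layer0 => /orP[]/eqP-> /orP[]/eqP->; rewrite ?eqxx // e_sym. Qed.

Lemma N2_nonadj_p3 w : w \in N 2 -> w != p2 -> ~~ e w p3.
Proof. by move=> w2; apply: contraNN => ewp3; apply/eqP/p3_N2_uniq; rewrite // e_sym. Qed.

Ltac by_layers :=
  first [ eapply (layer_nonadj e_sym); [eassumption | eassumption | reflexivity]
        | rewrite e_sym; eapply (layer_nonadj e_sym); [eassumption | eassumption | reflexivity]
        | eapply layer_neq; [eassumption | eassumption | reflexivity] ].

Ltac graph_fact :=
  solve [ assumption | rewrite e_sym; assumption | rewrite eq_sym; assumption | by_layers
        | by apply: N2_indep | by apply: N2_nonadj_p3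
        | by rewrite e_sym; apply: N2_nonadj_p3 ].

Lemma N2_nbr_eq_p2 v w : v \in N 1 -> e v p2 -> w \in N 2 -> e v w -> w = p2.
Proof.
move=> v1 evp2 w2 evw; apply/eqP; apply: contraT => nwp2; exfalso.
have [t t0 evt] := layer_down v1.
by apply: (S115_absurd v t w p2 p3 p4 b c); graph_fact.
Qed.

Lemma N1_N2_nbr_uniq v u u' :
  v \in N 1 -> u \in N 2 -> u' \in N 2 -> e v u -> e v u' -> u = u'.
Proof.
move=> v1 u2 u'2 evu evu'; apply/eqP; apply: contraT => nequu'; exfalso.
have nvp2 : ~~ e v p2.
  apply: contra nequu' => evp2.
  by rewrite (N2_nbr_eq_p2 v1 evp2 u2 evu) (N2_nbr_eq_p2 v1 evp2 u'2 evu').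
have neq_p2 w : e v w -> w != p2 by move=> evw; apply: contraNneq nvp2 => <-.
have nadj_p1 w : w \in N 2 -> e v w -> ~~ e w p1.
  move=> w2 evw; apply: contra (neq_p2 w evw) => ewp1; apply/eqP.
  by apply: (N2_nbr_eq_p2 p1_1); rewrite // e_sym.
have [up2 u'p2] := (neq_p2 u evu, neq_p2 u' evu').
have [nup1 nu'p1] := (nadj_p1 u u2 evu, nadj_p1 u' u'2 evu').
have [evp1|nvp1] := boolP (e v p1).
  by apply: (S115_absurd v u u' p1 p2 p3 p4 b); graph_fact.
have through_N0 t : t \in N 0 -> e p1 t -> e v t -> False.
  by move=> t0 ep1t evt; apply: (S115_absurd v u u' t p1 p2 p3 p4); graph_fact.
have [evx|nvx] := boolP (e v x); first exact: (through_N0 x).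
have evy : e v y by move: (layer1_adj v1); rewrite (negbTE nvx).
have [ep1y|np1y] := boolP (e p1 y); first exact: (through_N0 y).
have eyx : e y x by rewrite e_sym.
by apply: (S115_absurd v u u' y x p1 p2 p3); graph_fact.
Qed.

Let W := [set w in N 1 | ~~ e w p2].

Lemma card_W_ge4 : 4 <= #|W|.
Proof.
pose f u := odflt u [pick w in N 1 | e u w].
have fP u : u \in N 2 -> (f u \in N 1) && e u (f u).
  move=> u2; have [w w1 euw] := layer_down u2.
  by rewrite /f; case: pickP => [w' /andP[-> ->] | /(_ w)] //=; rewrite w1 euw.
have fW : f @: (N 2 :\ p2) \subset W.
  apply/subsetP => _ /imsetP[u /setD1P[neup2 u2] ->]; have /andP[fu1 eufu] := fP u u2.
  rewrite inE fu1 /=; apply: contra neup2 => efup2; apply/eqP.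
  by apply: (N1_N2_nbr_uniq fu1 u2 p2_2); rewrite // e_sym.
have finj : {in N 2 :\ p2 &, injective f}.
  move=> u u' /setD1P[_ u2] /setD1P[_ u'2] equ.
  have /andP[fu1 eufu] := fP u u2; have /andP[_ eufu'] := fP u' u'2.
  by apply: (N1_N2_nbr_uniq fu1 u2 u'2); rewrite e_sym // equ.
have := subset_leq_card fW; rewrite card_in_imset //.
by move: N2_large; rewrite (cardsD1 p2 (N 2)) p2_2 add1n ltnS; apply: leq_trans.
Qed.

Lemma W_nbr_p1_adj_N0 t w : t \in N 0 -> e p1 t -> w \in W -> e w p1 -> e w t.
Proof.
move=> t0 ep1t /setIdP[w1 nwp2] ewp1; apply: contraT => nwt; exfalso.
by apply: (S115_absurd p1 t w p2 p3 p4 b c); graph_fact.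
Qed.

Lemma W_nbrs_N0_le1 t t' : t \in N 0 -> t' \in N 0 -> t != t' -> e p1 t -> e p1 t' ->
  #|[set w in W | e w t]| <= 1.
Proof.
move=> t0 t'0 neqtt' ep1t ep1t'; have ett' := N0_adj t0 t'0 neqtt'.
have nadj_p1 w : w \in W -> ~~ e w p1.
  move=> wW; apply/negP => ewp1.
  have [ewt ewt'] := (W_nbr_p1_adj_N0 t0 ep1t wW ewp1, W_nbr_p1_adj_N0 t'0 ep1t' wW ewp1).
  by apply: (K4_absurd t t' p1 w); rewrite // e_sym.
have nadj_t' w : w \in W -> e w t -> ~~ e w t'.
  move=> /[dup] wW /setIdP[_ nwp2] ewt; apply/negP => ewt'.
  have eqp1w : p1 = w by apply: (common_neighbor_eq ett'); rewrite // e_sym.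
  by move: nwp2; rewrite -eqp1w e_sym ep2p1.
apply/card_le1_eqP => w w'.
move=> /setIdP[/[dup] wW /setIdP[w1 nwp2] ewt] /setIdP[/[dup] w'W /setIdP[w'1 nw'p2] ew't].
have [nwp1 nw'p1] := (nadj_p1 w wW, nadj_p1 w' w'W).
have [nwt' nw't'] := (nadj_t' w wW ewt, nadj_t' w' w'W ew't).
apply/eqP; apply: contraT => neqww'; exfalso.
have [eww'|nww'] := boolP (e w w').
  by apply: (butterfly_absurd t t' p1 w w'); rewrite // e_sym.
by apply: (S115_absurd t w w' p1 p2 p3 p4 b); graph_fact.
Qed.

Lemma p1_nadj_y : ~~ e p1 y.
Proof.
apply/negP => ep1y.
have nexy : x != y by apply: contraTneq exy => ->; rewrite e_irr.
have subW : W \subset [set w in W | e w x] :|: [set w in W | e w y].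
  apply/subsetP => w /[dup] wW /setIdP[w1 _]; apply/setUP.
  by case/orP: (layer1_adj w1) => ?; [left | right]; apply/setIdP.
have := leq_trans card_W_ge4 (leq_trans (subset_leq_card subW) (leq_card_setU _ _)).
have := W_nbrs_N0_le1 x0 y0 nexy ep1x ep1y.
have neyx : y != x by rewrite eq_sym.
have := W_nbrs_N0_le1 y0 x0 neyx ep1y ep1x.
by move=> le_y le_x; rewrite ltnNge (leq_trans (leq_add le_x le_y)).
Qed.

Lemma W_nbr_x_adj_p1 w : ~~ e p1 y -> w \in W -> e w x -> ~~ e w y -> e w p1.
Proof.
move=> np1y /setIdP[w1 nwp2] ewx nwy; apply: contraT => nwp1; exfalso.
by apply: (S115_absurd x y w p1 p2 p3 p4 b); graph_fact.
Qed.

Lemma W_private_nbrs_y_adj w w' : ~~ e p1 y -> w \in W -> w' \in W -> w != w' ->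
  e w y -> e w' y -> ~~ e w x -> ~~ e w' x -> e w w'.
Proof.
move=> np1y wW w'W neqww' ewy ew'y nwx nw'x.
have nadj_p1 v : v \in W -> ~~ e v x -> ~~ e v p1.
  by move=> vW; apply: contraNN; apply: W_nbr_p1_adj_N0.
have [nwp1 nw'p1] := (nadj_p1 w wW nwx, nadj_p1 w' w'W nw'x).
move: wW w'W => /setIdP[w1 nwp2] /setIdP[w'1 nw'p2]; apply: contraT => nww'; exfalso.
by apply: (S115_absurd y w w' x p1 p2 p3 p4); graph_fact.
Qed.

Lemma p1_adj_y : e p1 y.
Proof.
apply: contraT => np1y; exfalso.
pose Wp := [set w in W | e w p1].
pose Wc := [set w in W | e w x && e w y].
pose Wo := [set w in W | e w y && ~~ e w x].
have subW : W \subset Wp :|: Wc :|: Wo.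
  apply/subsetP => w /[dup] wW /setIdP[w1 _]; apply/setUP.
  have [ewx|nwx] := boolP (e w x); have [ewy|nwy] := boolP (e w y).
  - by left; apply/setUP; right; apply/setIdP; rewrite ewx ewy.
  - by left; apply/setUP; left; apply/setIdP; split; last exact: W_nbr_x_adj_p1.
  - by right; apply/setIdP; rewrite ewy nwx.
  - by move: (layer1_adj w1); rewrite (negbTE nwx) (negbTE nwy).
have Wp_le1 : #|Wp| <= 1.
  apply/card_le1_eqP => w w' /setIdP[wW ewp1] /setIdP[w'W ew'p1].
  have [ewx ew'x] := (W_nbr_p1_adj_N0 x0 ep1x wW ewp1, W_nbr_p1_adj_N0 x0 ep1x w'W ew'p1).
  by apply: (common_neighbor_eq ep1x); rewrite // e_sym.
have Wc_le1 : #|Wc| <= 1.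
  apply/card_le1_eqP => w w' /setIdP[_ /andP[ewx ewy]] /setIdP[_ /andP[ew'x ew'y]].
  by apply: (common_neighbor_eq exy); rewrite // e_sym.
have Wo_clique w w' : w \in Wo -> w' \in Wo -> w != w' -> e w w'.
  move=> /setIdP[wW /andP[ewy nwx]] /setIdP[w'W /andP[ew'y nw'x]] neqww'.
  exact: W_private_nbrs_y_adj.
have Wo_le2 : #|Wo| <= 2.
  rewrite leqNgt; apply/negP => /card_gt2P[w1 [w2 [w3 [[o1 o2 o3] [n12 n23 n31]]]]].
  have e12 := Wo_clique _ _ o1 o2 n12; have e23 := Wo_clique _ _ o2 o3 n23.
  have e31 := Wo_clique _ _ o3 o1 n31.
  move: o1 o2 o3 => /setIdP[_ /andP[e1y _]] /setIdP[_ /andP[e2y _]] /setIdP[_ /andP[e3y _]].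
  by apply: (K4_absurd y w1 w2 w3); rewrite // e_sym.
have cardW : 4 <= #|Wp| + #|Wc| + #|Wo|.
  apply: leq_trans card_W_ge4 (leq_trans (subset_leq_card subW) _).
  exact: leq_trans (leq_card_setU _ _) (leq_add (leq_card_setU _ _) (leqnn _)).
have [c0 /setIdP[/setIdP[c01 _] /andP[ec0x ec0y]]] : exists c0, c0 \in Wc.
  apply/card_gt0P; rewrite lt0n; apply: contraTneq cardW => ->.
  by rewrite addn0 -ltnNge ltnS (leq_add Wp_le1 Wo_le2).
have [w1 [w2 [o1 o2 n12]]] : exists w1 w2, [/\ w1 \in Wo, w2 \in Wo & w1 != w2].
  apply/card_gt1P; rewrite ltnNge; apply: contraTN cardW => Wo_le1.
  by rewrite -ltnNge ltnS (leq_add (leq_add Wp_le1 Wc_le1) Wo_le1).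
have e12 := Wo_clique _ _ o1 o2 n12.
have nadj_c0 w : w \in Wo -> ~~ e c0 w.
  move=> /setIdP[/setIdP[wN1 _] /andP[ewy _]]; apply/negP => ec0w.
  have eqxw : x = w by apply: (common_neighbor_eq (_ : e y c0)); rewrite // e_sym.
  by move: (layer_neq x0 wN1 isT); rewrite eqxw eqxx.
have [nc0w1 nc0w2] := (nadj_c0 w1 o1, nadj_c0 w2 o2).
move: o1 o2 => /setIdP[_ /andP[ew1y nw1x]] /setIdP[_ /andP[ew2y nw2x]].
by apply: (butterfly_absurd y x c0 w1 w2); rewrite // e_sym.
Qed.

Lemma descending_path_absurd : False.
Proof. by have := p1_nadj_y; rewrite p1_adj_y. Qed.

End DescendingPath.

Lemma N5_nbr_adj_N4 x y b c p4 : e x y ->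
  (forall u v, u \in layer e x y 2 -> v \in layer e x y 2 -> ~~ e u v) ->
  (forall z w w', z \in layer e x y 3 -> w \in layer e x y 2 -> w' \in layer e x y 2 ->
     e z w -> e z w' -> w = w') ->
  5 <= #|layer e x y 2| ->
  b \in layer e x y 5 -> c \in layer e x y 5 -> p4 \in layer e x y 4 ->
  e b c -> e b p4 -> e c p4.
Proof.
move=> exy N2_indep N3_uniq N2_large b5 c5 p4_4 ebc ebp4; apply: contraT => ncp4; exfalso.
have [p3 p3_3 ep4p3] := layer_down p4_4.
have [p2 p2_2 ep3p2] := layer_down p3_3.
have [p1 p1_1 ep2p1] := layer_down p2_2.
have [t t0 ep1t] := layer_down p1_1.
have p3_N2_uniq w : w \in layer e x y 2 -> e p3 w -> w = p2.
  by move=> w2 ep3w; apply: N3_uniq p3_3 w2 p2_2 ep3w ep3p2.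
move: t0 ep1t; rewrite layer0 => /orP[]/eqP-> ep1t.
  exact: (descending_path_absurd exy N2_indep N2_large c5 b5 p4_4 p3_3 p2_2 p1_1
            ebc ebp4 ncp4 ep4p3 ep3p2 ep2p1 ep1t p3_N2_uniq).
have eyx : e y x by rewrite e_sym.
rewrite !(layerC e x y) in N2_indep N2_large c5 b5 p4_4 p3_3 p2_2 p1_1 p3_N2_uniq.
exact: (descending_path_absurd eyx N2_indep N2_large c5 b5 p4_4 p3_3 p2_2 p1_1
          ebc ebp4 ncp4 ep4p3 ep3p2 ep2p1 ep1t p3_N2_uniq).
Qed.

End LongInducedPath.

Theorem lemma28 (T : finType) (e : rel T)
  (e_sym : symmetric e) (e_irr : irreflexive e)
  (hS115 : induced_free e S115) (hK4 : induced_free e K4)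
  (hdiam : induced_free e diamond) (hbutt : induced_free e butterfly)
  (x y r : T) (hxy : e x y) (hrx : e r x) (hry : ~~ e r y) (hr : r != y)
  (hN2ind : forall u v, u \in Nlayer e x y 2 -> v \in Nlayer e x y 2 -> ~~ e u v)
  (hN3 : forall z, z \in Nlayer e x y 3 ->
           #|[set w in Nlayer e x y 2 | e z w]| = 1)
  (hN2card : 5 <= #|Nlayer e x y 2|)
  (hN5 : Nlayer e x y 5 != set0) :
  (~ exists a b c,
       [/\ a \in Nlayer e x y 5, b \in Nlayer e x y 5 & c \in Nlayer e x y 5] /\
       [/\ a != c, e a b, e b c & ~~ e a c]) /\
  (~ exists a b c,
       [/\ a \in Nlayer e x y 5, b \in Nlayer e x y 5 & c \in Nlayer e x y 5] /\
       [/\ e a b, e b c & e a c]).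
Proof.
have N3_uniq z w w' : z \in layer e x y 3 -> w \in layer e x y 2 -> w' \in layer e x y 2 ->
    e z w -> e z w' -> w = w'.
  move=> z3 w2 w'2 ezw ezw'; have /card_le1_eqP := eq_leq (hN3 z z3).
  by apply; rewrite inE; apply/andP.
have N5_adj := N5_nbr_adj_N4 e_sym e_irr hS115 hK4 hdiam hbutt hxy hN2ind N3_uniq hN2card.
split=> -[a [b [c [[a5 b5 c5] edges]]]].
- have [neqac eab ebc nac] := edges; have [p4 p4_4 ebp4] := layer_down b5.
  have [eap4 ecp4] : e a p4 /\ e c p4.
    by split; apply: (N5_adj b) => //; rewrite e_sym.
  by apply: (no_induced_diamond e_sym e_irr hdiam neqac ebp4); rewrite // e_sym.
- have [eab ebc eac] := edges; have [p4 p4_4 eap4] := layer_down a5.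
  have [ebp4 ecp4] : e b p4 /\ e c p4 by split; apply: (N5_adj a).
  exact: (no_K4 e_sym e_irr hK4 a b c p4).
Qed.
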